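(* Every typed term is strongly normalizable: if $\Gamma \vdash t : A \,;\, \Delta$ is derivable in the type system described in the context, then there is no infinite sequence $(t_i)_{i<\omega}$ with $t_0 = t$ and $t_i \triangleright t_{i+1}$ for all $i$.
   Context: Types are built from propositional variables and the constant $\perp$ using $\to$, $\wedge$, $\vee$. There are two disjoint infinite sets of variables: $\lambda$-variables $x,y,\dots$ and $\mu$-variables $a,b,\dots$. Terms $\mathcal{T}$ and $\mathcal{E}$-terms $\mathcal{E}$ are given by $\mathcal{T} ::= x \mid \lambda x.\mathcal{T} \mid (\mathcal{T}\;\mathcal{E}) \mid \langle \mathcal{T},\mathcal{T}\rangle \mid \omega_1\mathcal{T} \mid \omega_2\mathcal{T} \mid \mu a.\mathcal{T} \mid (a\;\mathcal{T})$, $\mathcal{E} ::= \mathcal{T} \mid \pi_1 \mid \pi_2 \mid [x.\mathcal{T}, y.\mathcal{T}]$ ($\lambda x$ binds $x$, $\mu a$ binds $a$, and in $[x.u,y.v]$ $x$ is bound in $u$ and $y$ in $v$; terms are taken up to renaming of bound variables). Contexts $\Gamma$ (resp. $\Delta$) are sets of declarations $x:A$ (resp. $a:A$). Typing rules for judgments $\Gamma \vdash t : A \,;\, \Delta$: (ax) $\Gamma, x:A \vdash x:A;\Delta$; ($\to_i$) from $\Gamma,x:A\vdash t:B;\Delta$ infer $\Gamma\vdash \lambda x.t : A\to B;\Delta$; ($\to_e$) from $\Gamma\vdash u:A\to B;\Delta$ and $\Gamma\vdash v:A;\Delta$ infer $\Gamma\vdash (u\;v):B;\Delta$; ($\wedge_i$)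 from $\Gamma\vdash u:A;\Delta$ and $\Gamma\vdash v:B;\Delta$ infer $\Gamma\vdash\langle u,v\rangle : A\wedge B;\Delta$; ($\wedge_e^1$, $\wedge_e^2$) from $\Gamma\vdash t:A\wedge B;\Delta$ infer $\Gamma\vdash (t\;\pi_1):A;\Delta$ and $\Gamma\vdash (t\;\pi_2):B;\Delta$; ($\vee_i^1$, $\vee_i^2$) from $\Gamma\vdash t:A;\Delta$ infer $\Gamma\vdash\omega_1 t : A\vee B;\Delta$; from $\Gamma\vdash t:B;\Delta$ infer $\Gamma\vdash \omega_2 t:A\vee B;\Delta$; ($\vee_e$) from $\Gamma\vdash t:A\vee B;\Delta$, $\Gamma,x:A\vdash u:C;\Delta$, $\Gamma,y:B\vdash v:C;\Delta$ infer $\Gamma\vdash (t\;[x.u,y.v]):C;\Delta$; ($abs_i$) from $\Gamma\vdash t:A;\Delta,a:A$ infer $\Gamma\vdash (a\;t):\perp;\Delta,a:A$; ($abs_e$) from $\Gamma\vdash t:\perp;\Delta,a:A$ infer $\Gamma\vdash \mu a.t : A;\Delta$. A term is typed if $\Gamma\vdash t:A;\Delta$ is derivable for some $\Gamma,A,\Delta$. The one-step reduction $\triangleright$ on $\mathcal{E}$-terms is the closure under all term constructors of the rules: $(\lambda x.u\;v)\triangleright u[x:=v]$; $(\langle t_1,t_2\rangle\;\pi_i)\triangleright t_i$; $(\omega_i t\;[x_1.u_1,x_2.u_2])\triangleright u_i[x_i:=t]$; $((t\;[x_1.u_1,x_2.u_2])\;\varepsilon)\triangleright (t\;[x_1.(u_1\;\varepsilon),x_2.(u_2\;\varepsilon)])$;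 $(\mu a.t\;\varepsilon)\triangleright \mu a.t[a:=^*\varepsilon]$, where $\varepsilon$ is any $\mathcal{E}$-term and $t[a:=^*\varepsilon]$ is obtained from $t$ by replacing inductively each subterm of the form $(a\;v)$ by $(a\;(v\;\varepsilon))$. *)

(* Lambda-mu calculus with conjunction and disjunction,
   terms up to alpha-conversion represented with de Bruijn indices:
   lambda-variables and mu-variables are two separate index spaces. *)
From Stdlib Require Import Arith.

Inductive ty : Type :=
| TVar (p : nat)
| Bot
| Arr (A B : ty)
| And (A B : ty)
| Or (A B : ty).

(* Var n      : lambda-variable (de Bruijn index n, lambda-var space)
   Lam t      : \x.t (binds lambda-index 0 in t)
   App t e    : (t e)
   Pair u v   : <u,v>
   Inj1 t, Inj2 t : omega_1 t, omega_2 t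
   Mu t       : mu a.t (binds mu-index 0 in t)
   Name a t   : (a t), a a mu-variable (de Bruijn index, mu-var space)
   ETm t      : a term seen as an E-term
   Proj1, Proj2 : pi_1, pi_2
   Case u v   : [x.u, y.v] (binds lambda-index 0 in u and in v) *)
Inductive term : Type :=
| Var (n : nat)
| Lam (t : term)
| App (t : term) (e : eterm)
| Pair (u v : term)
| Inj1 (t : term)
| Inj2 (t : term)
| Mu (t : term)
| Name (a : nat) (t : term)
with eterm : Type :=
| ETm (t : term)
| Proj1
| Proj2
| Case (u v : term).

Fixpoint liftL (k : nat) (t : term) {struct t} : term :=
  match t with
  | Var n => Var (if k <=? n then S n else n)
  | Lam t => Lam (liftL (S k) t)
  | App t e => App (liftL k t) (liftLe k e)
  | Pair u v => Pair (liftL k u) (liftL k v)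
  | Inj1 t => Inj1 (liftL k t)
  | Inj2 t => Inj2 (liftL k t)
  | Mu t => Mu (liftL k t)
  | Name a t => Name a (liftL k t)
  end
with liftLe (k : nat) (e : eterm) {struct e} : eterm :=
  match e with
  | ETm t => ETm (liftL k t)
  | Proj1 => Proj1
  | Proj2 => Proj2
  | Case u v => Case (liftL (S k) u) (liftL (S k) v)
  end.

Fixpoint liftM (k : nat) (t : term) {struct t} : term :=
  match t with
  | Var n => Var n
  | Lam t => Lam (liftM k t)
  | App t e => App (liftM k t) (liftMe k e)
  | Pair u v => Pair (liftM k u) (liftM k v)
  | Inj1 t => Inj1 (liftM k t)
  | Inj2 t => Inj2 (liftM k t)
  | Mu t => Mu (liftM (S k) t)
  | Name a t => Name (if k <=? a then S a else a) (liftM k t)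
  end
with liftMe (k : nat) (e : eterm) {struct e} : eterm :=
  match e with
  | ETm t => ETm (liftM k t)
  | Proj1 => Proj1
  | Proj2 => Proj2
  | Case u v => Case (liftM k u) (liftM k v)
  end.

(* Capture-avoiding substitution t[x_k := v] of the lambda-variable with
   index k by v (the binder of k is removed: indices above k decrease). *)
Fixpoint substL (k : nat) (v : term) (t : term) {struct t} : term :=
  match t with
  | Var n => match Nat.compare n k with
             | Eq => v
             | Lt => Var n
             | Gt => Var (pred n)
             end
  | Lam t => Lam (substL (S k) (liftL 0 v) t)
  | App t e => App (substL k v t) (substLe k v e)
  | Pair u w => Pair (substL k v u) (substL k v w)
  | Inj1 t => Inj1 (substL k v t)
  | Inj2 t => Inj2 (substL k v t)
  | Mu t => Mu (substL k (liftM 0 v) t)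
  | Name a t => Name a (substL k v t)
  end
with substLe (k : nat) (v : term) (e : eterm) {struct e} : eterm :=
  match e with
  | ETm t => ETm (substL k v t)
  | Proj1 => Proj1
  | Proj2 => Proj2
  | Case u w => Case (substL (S k) (liftL 0 v) u) (substL (S k) (liftL 0 v) w)
  end.

(* mu-substitution t[a_k :=* eps]: replace inductively every subterm (a_k v)
   by (a_k (v eps)). The binder of a_k is kept. *)
Fixpoint substM (k : nat) (eps : eterm) (t : term) {struct t} : term :=
  match t with
  | Var n => Var n
  | Lam t => Lam (substM k (liftLe 0 eps) t)
  | App t e => App (substM k eps t) (substMe k eps e)
  | Pair u w => Pair (substM k eps u) (substM k eps w)
  | Inj1 t => Inj1 (substM k eps t)
  | Inj2 t => Inj2 (substM k eps t)
  | Mu t => Mu (substM (S k) (liftMe 0 eps) t)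
  | Name a t => if a =? k then Name a (App (substM k eps t) eps)
                else Name a (substM k eps t)
  end
with substMe (k : nat) (eps : eterm) (e : eterm) {struct e} : eterm :=
  match e with
  | ETm t => ETm (substM k eps t)
  | Proj1 => Proj1
  | Proj2 => Proj2
  | Case u w => Case (substM k (liftLe 0 eps) u) (substM k (liftLe 0 eps) w)
  end.

Inductive red : term -> term -> Prop :=
| r_beta u v : red (App (Lam u) (ETm v)) (substL 0 v u)
| r_proj1 t1 t2 : red (App (Pair t1 t2) Proj1) t1
| r_proj2 t1 t2 : red (App (Pair t1 t2) Proj2) t2
| r_case1 t u1 u2 : red (App (Inj1 t) (Case u1 u2)) (substL 0 t u1)
| r_case2 t u1 u2 : red (App (Inj2 t) (Case u1 u2)) (substL 0 t u2)
| r_comm t u1 u2 eps :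
    red (App (App t (Case u1 u2)) eps)
        (App t (Case (App u1 (liftLe 0 eps)) (App u2 (liftLe 0 eps))))
| r_mu t eps : red (App (Mu t) eps) (Mu (substM 0 (liftMe 0 eps) t))
| c_lam t t' : red t t' -> red (Lam t) (Lam t')
| c_appl t t' e : red t t' -> red (App t e) (App t' e)
| c_appr t e e' : rede e e' -> red (App t e) (App t e')
| c_pairl u u' v : red u u' -> red (Pair u v) (Pair u' v)
| c_pairr u v v' : red v v' -> red (Pair u v) (Pair u v')
| c_inj1 t t' : red t t' -> red (Inj1 t) (Inj1 t')
| c_inj2 t t' : red t t' -> red (Inj2 t) (Inj2 t')
| c_mu t t' : red t t' -> red (Mu t) (Mu t')
| c_name a t t' : red t t' -> red (Name a t) (Name a t')
with rede : eterm -> eterm -> Prop :=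
| ce_tm t t' : red t t' -> rede (ETm t) (ETm t')
| ce_casel u u' v : red u u' -> rede (Case u v) (Case u' v)
| ce_caser u v v' : red v v' -> rede (Case u v) (Case u v').

Definition ctx := nat -> ty.
Definition scons (A : ty) (G : ctx) : ctx :=
  fun n => match n with 0 => A | S m => G m end.

Inductive typing : ctx -> ctx -> term -> ty -> Prop :=
| ty_ax G D x : typing G D (Var x) (G x)
| ty_arri G D t A B :
    typing (scons A G) D t B -> typing G D (Lam t) (Arr A B)
| ty_arre G D u v A B :
    typing G D u (Arr A B) -> typing G D v A -> typing G D (App u (ETm v)) B
| ty_andi G D u v A B :
    typing G D u A -> typing G D v B -> typing G D (Pair u v) (And A B)
| ty_ande1 G D t A B : typing G D t (And A B) -> typing G D (App t Proj1) A
| ty_ande2 G D t A B : typing G D t (And A B) -> typing G D (App t Proj2) B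
| ty_ori1 G D t A B : typing G D t A -> typing G D (Inj1 t) (Or A B)
| ty_ori2 G D t A B : typing G D t B -> typing G D (Inj2 t) (Or A B)
| ty_ore G D t u v A B C :
    typing G D t (Or A B) -> typing (scons A G) D u C ->
    typing (scons B G) D v C -> typing G D (App t (Case u v)) C
| ty_absi G D a t : typing G D t (D a) -> typing G D (Name a t) Bot
| ty_abse G D t A : typing G (scons A D) t Bot -> typing G D (Mu t) A.

(* A term of type A is reducible when it is strongly normalizing
   in front of every stack of [cont A]; for a disjunction these stacks are defined by
   orthogonality, which is what absorbs the commuting conversions.  The core lemmas are head
   expansions: a redex in front of a stack is SN as soon as its contractum and the parts the
   contraction may erase are SN.  They are proved by induction on the length of the stack
   (commuting conversions and the μ-rule consume it) and on the SN of those parts.  Adequacy is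
   proved for simultaneous instantiations of λ-variables by terms and of μ-variables by stacks,
   which covers both substitutions of the calculus. *)

From Stdlib Require Import Arith List Lia Relations Wellfounded FunctionalExtensionality.
Import ListNotations.

Scheme term_ind' := Induction for term Sort Prop
with eterm_ind' := Induction for eterm Sort Prop.
Combined Scheme term_eterm_ind from term_ind', eterm_ind'.

Fixpoint apps (t : term) (K : list eterm) : term :=
  match K with [] => t | e :: K => apps (App t e) K end.

Lemma apps_app t K1 K2 : apps t (K1 ++ K2) = apps (apps t K1) K2.
Proof. revert t; induction K1; simpl; auto. Qed.

(** * Simultaneous instantiation *)

(* A μ-substitution sends the μ-index a to (b, K): every subterm (a v) becomes (b (v K)).
   Lifting, [substL] and [substM] are all instances of [inst]. *)
Definition lsub := nat -> term.
Definition msub := nat -> nat * list eterm.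

Definition upL_lsub (s : lsub) : lsub :=
  fun n => match n with 0 => Var 0 | S m => liftL 0 (s m) end.
Definition upL_msub (k : msub) : msub :=
  fun a => (fst (k a), map (liftLe 0) (snd (k a))).
Definition upM_lsub (s : lsub) : lsub := fun n => liftM 0 (s n).
Definition upM_msub (k : msub) : msub :=
  fun a => match a with 0 => (0, []) | S b => (S (fst (k b)), map (liftMe 0) (snd (k b))) end.

Fixpoint inst (s : lsub) (k : msub) (t : term) {struct t} : term :=
  match t with
  | Var n => s n
  | Lam t => Lam (inst (upL_lsub s) (upL_msub k) t)
  | App t e => App (inst s k t) (inste s k e)
  | Pair u v => Pair (inst s k u) (inst s k v)
  | Inj1 t => Inj1 (inst s k t)
  | Inj2 t => Inj2 (inst s k t)
  | Mu t => Mu (inst (upM_lsub s) (upM_msub k) t)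
  | Name a t => Name (fst (k a)) (apps (inst s k t) (snd (k a)))
  end
with inste (s : lsub) (k : msub) (e : eterm) {struct e} : eterm :=
  match e with
  | ETm t => ETm (inst s k t)
  | Proj1 => Proj1
  | Proj2 => Proj2
  | Case u v => Case (inst (upL_lsub s) (upL_msub k) u) (inst (upL_lsub s) (upL_msub k) v)
  end.

Lemma inst_apps s k t K : inst s k (apps t K) = apps (inst s k t) (map (inste s k) K).
Proof. revert t; induction K; simpl; intros; [reflexivity|rewrite IHK; reflexivity]. Qed.

Definition lren (xi : nat -> nat) : lsub := fun n => Var (xi n).
Definition mren (z : nat -> nat) : msub := fun a => (z a, []).
Definition up_ren (xi : nat -> nat) : nat -> nat :=
  fun n => match n with 0 => 0 | S m => S (xi m) end.
Definition bump (k n : nat) : nat := if k <=? n then S n else n.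

Notation lid := (lren (fun n => n)).
Notation mid := (mren (fun a => a)).

Lemma upL_lren xi : upL_lsub (lren xi) = lren (up_ren xi).
Proof. apply functional_extensionality; intros [|n]; reflexivity. Qed.
Lemma upL_mren z : upL_msub (mren z) = mren z.
Proof. reflexivity. Qed.
Lemma upM_lren xi : upM_lsub (lren xi) = lren xi.
Proof. reflexivity. Qed.
Lemma upM_mren z : upM_msub (mren z) = mren (up_ren z).
Proof. apply functional_extensionality; intros [|a]; reflexivity. Qed.
Lemma up_ren_bump k : up_ren (bump k) = bump (S k).
Proof.
  apply functional_extensionality; intros [|n]; unfold bump, up_ren; simpl; auto.
  destruct (k <=? n); auto.
Qed.
Lemma up_ren_id : up_ren (fun n => n) = (fun n => n).
Proof. apply functional_extensionality; intros [|n]; reflexivity. Qed.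

Ltac simpl_up := rewrite ?upL_lren, ?upL_mren, ?upM_lren, ?upM_mren, ?up_ren_bump, ?up_ren_id.

Lemma liftL_as_inst :
  (forall t k, liftL k t = inst (lren (bump k)) mid t) /\
  (forall e k, liftLe k e = inste (lren (bump k)) mid e).
Proof.
  apply term_eterm_ind; intros; simpl; simpl_up;
  repeat match goal with H : forall k, _ = _ |- _ => rewrite H end; reflexivity.
Qed.

Lemma liftM_as_inst :
  (forall t k, liftM k t = inst lid (mren (bump k)) t) /\
  (forall e k, liftMe k e = inste lid (mren (bump k)) e).
Proof.
  apply term_eterm_ind; intros; simpl; simpl_up;
  repeat match goal with H : forall k, _ = _ |- _ => rewrite H end; reflexivity.
Qed.

Lemma inst_id : (forall t, inst lid mid t = t) /\ (forall e, inste lid mid e = e).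
Proof. apply term_eterm_ind; intros; simpl; simpl_up; congruence || reflexivity. Qed.

Lemma inst_ren :
  (forall t s k xi z, inst s k (inst (lren xi) (mren z) t)
                      = inst (fun n => s (xi n)) (fun a => k (z a)) t) /\
  (forall e s k xi z, inste s k (inste (lren xi) (mren z) e)
                      = inste (fun n => s (xi n)) (fun a => k (z a)) e).
Proof.
  apply term_eterm_ind; intros; simpl; simpl_up;
  repeat match goal with H : forall s k xi z, _ = _ |- _ => rewrite H end; try reflexivity;
  repeat f_equal; apply functional_extensionality; intros [|?]; reflexivity.
Qed.

Lemma liftL_eq k : liftL k = inst (lren (bump k)) mid.
Proof. apply functional_extensionality; intro; apply liftL_as_inst. Qed.
Lemma liftLe_eq k : liftLe k = inste (lren (bump k)) mid.
Proof. apply functional_extensionality; intro; apply liftL_as_inst. Qed.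
Lemma liftM_eq k : liftM k = inst lid (mren (bump k)).
Proof. apply functional_extensionality; intro; apply liftM_as_inst. Qed.
Lemma liftMe_eq k : liftMe k = inste lid (mren (bump k)).
Proof. apply functional_extensionality; intro; apply liftM_as_inst. Qed.

Definition lsub_at (k : nat) (v : term) : lsub :=
  fun n => match Nat.compare n k with Eq => v | Lt => Var n | Gt => Var (pred n) end.

Lemma upL_lsub_at k v : upL_lsub (lsub_at k v) = lsub_at (S k) (liftL 0 v).
Proof.
  apply functional_extensionality; intros [|n]; unfold upL_lsub, lsub_at; simpl; auto.
  destruct (Nat.compare n k) eqn:E; simpl; auto.
  apply Nat.compare_gt_iff in E. destruct n; [lia|reflexivity].
Qed.

Lemma upM_lsub_at k v : upM_lsub (lsub_at k v) = lsub_at k (liftM 0 v).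
Proof.
  apply functional_extensionality; intros n; unfold upM_lsub, lsub_at.
  destruct (Nat.compare n k); reflexivity.
Qed.

Lemma substL_as_inst :
  (forall t k v, substL k v t = inst (lsub_at k v) mid t) /\
  (forall e k v, substLe k v e = inste (lsub_at k v) mid e).
Proof.
  apply term_eterm_ind; intros; simpl; rewrite ?upL_lsub_at, ?upM_lsub_at; simpl_up;
  repeat match goal with H : forall k v, _ = _ |- _ => rewrite H end; reflexivity.
Qed.

Definition msub_at (k : nat) (e : eterm) : msub :=
  fun a => if a =? k then (a, [e]) else (a, []).

Lemma upL_msub_at k e : upL_msub (msub_at k e) = msub_at k (liftLe 0 e).
Proof.
  apply functional_extensionality; intros a; unfold upL_msub, msub_at.
  destruct (a =? k); reflexivity.
Qed.
Lemma upM_msub_at k e : upM_msub (msub_at k e) = msub_at (S k) (liftMe 0 e).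
Proof.
  apply functional_extensionality; intros [|a]; unfold upM_msub, msub_at; simpl; auto.
  destruct (a =? k); reflexivity.
Qed.

Lemma substM_as_inst :
  (forall t k e, substM k e t = inst lid (msub_at k e) t) /\
  (forall d k e, substMe k e d = inste lid (msub_at k e) d).
Proof.
  apply term_eterm_ind; intros; simpl; rewrite ?upL_msub_at, ?upM_msub_at; simpl_up;
  repeat match goal with H : forall k e, _ = _ |- _ => rewrite H end; try reflexivity.
  unfold msub_at; destruct (a =? k); reflexivity.
Qed.

Definition lsub_comp (s2 s1 : lsub) (k1 : msub) : lsub := fun n => inst s1 k1 (s2 n).
Definition msub_comp (k2 : msub) (s1 : lsub) (k1 : msub) : msub :=
  fun a => (fst (k1 (fst (k2 a))), map (inste s1 k1) (snd (k2 a)) ++ snd (k1 (fst (k2 a)))).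

Section CompUp.
Variables (s1 : lsub) (k1 : msub).

Lemma lsub_comp_upL s2 :
  (forall x, inst (upL_lsub s1) (upL_msub k1) (liftL 0 x) = liftL 0 (inst s1 k1 x)) ->
  lsub_comp (upL_lsub s2) (upL_lsub s1) (upL_msub k1) = upL_lsub (lsub_comp s2 s1 k1).
Proof. intros H; apply functional_extensionality; intros [|n]; unfold lsub_comp; simpl; auto. Qed.

Lemma msub_comp_upL k2 :
  (forall e, inste (upL_lsub s1) (upL_msub k1) (liftLe 0 e) = liftLe 0 (inste s1 k1 e)) ->
  msub_comp (upL_msub k2) (upL_lsub s1) (upL_msub k1) = upL_msub (msub_comp k2 s1 k1).
Proof.
  intros H; apply functional_extensionality; intros a; unfold msub_comp, upL_msub; simpl.
  rewrite !map_app, !map_map. do 2 f_equal. apply map_ext; auto.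
Qed.

Lemma lsub_comp_upM s2 :
  (forall x, inst (upM_lsub s1) (upM_msub k1) (liftM 0 x) = liftM 0 (inst s1 k1 x)) ->
  lsub_comp (upM_lsub s2) (upM_lsub s1) (upM_msub k1) = upM_lsub (lsub_comp s2 s1 k1).
Proof. intros H; apply functional_extensionality; intros n; apply H. Qed.

Lemma msub_comp_upM k2 :
  (forall e, inste (upM_lsub s1) (upM_msub k1) (liftMe 0 e) = liftMe 0 (inste s1 k1 e)) ->
  msub_comp (upM_msub k2) (upM_lsub s1) (upM_msub k1) = upM_msub (msub_comp k2 s1 k1).
Proof.
  intros H; apply functional_extensionality; intros [|a]; unfold msub_comp, upM_msub; simpl; auto.
  rewrite !map_app, !map_map. do 2 f_equal. apply map_ext; auto.
Qed.

End CompUp.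

(* Composition is proved first for a renaming after an arbitrary [inst] ([ren_inst]), which
   gives the commutation of [inst] with lifting needed in the general case ([inst_inst]). *)
Lemma liftL_inst_ren xi z :
  (forall x, inst (upL_lsub (lren xi)) (upL_msub (mren z)) (liftL 0 x)
             = liftL 0 (inst (lren xi) (mren z) x)) /\
  (forall e, inste (upL_lsub (lren xi)) (upL_msub (mren z)) (liftLe 0 e)
             = liftLe 0 (inste (lren xi) (mren z) e)).
Proof.
  simpl_up; split; intros;
    rewrite ?liftL_eq, ?liftLe_eq, ?(proj1 inst_ren), ?(proj2 inst_ren); reflexivity.
Qed.

Lemma liftM_inst_ren xi z :
  (forall x, inst (upM_lsub (lren xi)) (upM_msub (mren z)) (liftM 0 x)
             = liftM 0 (inst (lren xi) (mren z) x)) /\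
  (forall e, inste (upM_lsub (lren xi)) (upM_msub (mren z)) (liftMe 0 e)
             = liftMe 0 (inste (lren xi) (mren z) e)).
Proof.
  simpl_up; split; intros;
    rewrite ?liftM_eq, ?liftMe_eq, ?(proj1 inst_ren), ?(proj2 inst_ren); reflexivity.
Qed.

Lemma inst_Name s k a X K :
  inst s k (Name a (apps X K))
  = Name (fst (k a)) (apps (inst s k X) (map (inste s k) K ++ snd (k a))).
Proof. simpl. rewrite inst_apps, apps_app. reflexivity. Qed.

Lemma ren_inst :
  (forall t s k xi z, inst (lren xi) (mren z) (inst s k t)
     = inst (lsub_comp s (lren xi) (mren z)) (msub_comp k (lren xi) (mren z)) t) /\
  (forall e s k xi z, inste (lren xi) (mren z) (inste s k e)
     = inste (lsub_comp s (lren xi) (mren z)) (msub_comp k (lren xi) (mren z)) e).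
Proof.
  apply term_eterm_ind; intros; try reflexivity;
  try (simpl; congruence).
  - simpl. rewrite <- lsub_comp_upL, <- msub_comp_upL by apply liftL_inst_ren.
    simpl_up. rewrite H. reflexivity.
  - simpl. rewrite <- lsub_comp_upM, <- msub_comp_upM by apply liftM_inst_ren.
    simpl_up. rewrite H. reflexivity.
  - change (inst s k (Name a t)) with (Name (fst (k a)) (apps (inst s k t) (snd (k a)))).
    rewrite inst_Name, H. reflexivity.
  - simpl. rewrite <- lsub_comp_upL, <- msub_comp_upL by apply liftL_inst_ren.
    simpl_up. rewrite H, H0. reflexivity.
Qed.

Lemma liftL_inst s k :
  (forall x, inst (upL_lsub s) (upL_msub k) (liftL 0 x) = liftL 0 (inst s k x)) /\
  (forall e, inste (upL_lsub s) (upL_msub k) (liftLe 0 e) = liftLe 0 (inste s k e)).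
Proof.
  split; intros; rewrite ?(liftL_eq 0), ?(liftLe_eq 0), ?(proj1 inst_ren), ?(proj2 inst_ren),
    ?(proj1 ren_inst), ?(proj2 ren_inst); f_equal; apply functional_extensionality; intros n;
  unfold lsub_comp, msub_comp, upL_lsub, upL_msub; simpl; rewrite ?app_nil_r, ?liftL_eq, ?liftLe_eq;
  reflexivity.
Qed.

Lemma liftM_inst s k :
  (forall x, inst (upM_lsub s) (upM_msub k) (liftM 0 x) = liftM 0 (inst s k x)) /\
  (forall e, inste (upM_lsub s) (upM_msub k) (liftMe 0 e) = liftMe 0 (inste s k e)).
Proof.
  split; intros; rewrite ?(liftM_eq 0), ?(liftMe_eq 0), ?(proj1 inst_ren), ?(proj2 inst_ren),
    ?(proj1 ren_inst), ?(proj2 ren_inst); f_equal; apply functional_extensionality; intros n;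
  unfold lsub_comp, msub_comp, upM_lsub, upM_msub; simpl; rewrite ?app_nil_r, ?liftM_eq, ?liftMe_eq;
  reflexivity.
Qed.

Lemma inst_inst :
  (forall t s2 k2 s1 k1,
     inst s1 k1 (inst s2 k2 t) = inst (lsub_comp s2 s1 k1) (msub_comp k2 s1 k1) t) /\
  (forall e s2 k2 s1 k1,
     inste s1 k1 (inste s2 k2 e) = inste (lsub_comp s2 s1 k1) (msub_comp k2 s1 k1) e).
Proof.
  apply term_eterm_ind; intros; try reflexivity;
  try (simpl; congruence).
  - simpl. rewrite <- lsub_comp_upL, <- msub_comp_upL by apply liftL_inst. rewrite H. reflexivity.
  - simpl. rewrite <- lsub_comp_upM, <- msub_comp_upM by apply liftM_inst. rewrite H. reflexivity.
  - change (inst s2 k2 (Name a t)) with (Name (fst (k2 a)) (apps (inst s2 k2 t) (snd (k2 a)))).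
    rewrite inst_Name, H. reflexivity.
  - simpl. rewrite <- lsub_comp_upL, <- msub_comp_upL by apply liftL_inst.
    rewrite H, H0. reflexivity.
Qed.

Definition lsub_cons (v : term) (s : lsub) : lsub :=
  fun n => match n with 0 => v | S m => s m end.

Lemma substL_liftL v :
  (forall x, substL 0 v (liftL 0 x) = x) /\ (forall e, substLe 0 v (liftLe 0 e) = e).
Proof.
  split; intros; rewrite ?(proj1 substL_as_inst), ?(proj2 substL_as_inst), ?liftL_eq, ?liftLe_eq,
    ?(proj1 inst_ren), ?(proj2 inst_ren).
  - rewrite <- (proj1 inst_id x) at 2; reflexivity.
  - rewrite <- (proj2 inst_id e) at 2; reflexivity.
Qed.

Lemma substL_inst_upL v s k t :
  substL 0 v (inst (upL_lsub s) (upL_msub k) t) = inst (lsub_cons v s) k t.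
Proof.
  rewrite (proj1 substL_as_inst), (proj1 inst_inst).
  f_equal; apply functional_extensionality.
  - intros [|n]; unfold lsub_comp; simpl; [reflexivity|].
    rewrite <- (proj1 substL_as_inst). apply substL_liftL.
  - intros a; unfold msub_comp, upL_msub; simpl. rewrite map_map, app_nil_r.
    rewrite (map_ext _ (fun e => e)).
    + rewrite map_id. destruct (k a); reflexivity.
    + intros e. rewrite <- (proj2 substL_as_inst). apply substL_liftL.
Qed.

Lemma inst_substL s k v u :
  inst s k (substL 0 v u) = substL 0 (inst s k v) (inst (upL_lsub s) (upL_msub k) u).
Proof.
  rewrite substL_inst_upL, (proj1 substL_as_inst), (proj1 inst_inst).
  f_equal; apply functional_extensionality.
  - intros [|n]; reflexivity.
  - intros a; unfold msub_comp; simpl. destruct (k a); reflexivity.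
Qed.

Lemma inst_substM s k eps t :
  inst (upM_lsub s) (upM_msub k) (substM 0 (liftMe 0 eps) t)
  = substM 0 (liftMe 0 (inste s k eps)) (inst (upM_lsub s) (upM_msub k) t).
Proof.
  rewrite !(proj1 substM_as_inst), !(proj1 inst_inst).
  f_equal; apply functional_extensionality.
  - intros n; unfold lsub_comp, upM_lsub; simpl.
    rewrite liftM_eq, (proj1 inst_ren). reflexivity.
  - intros [|a]; unfold msub_comp; simpl.
    + do 3 f_equal. apply liftM_inst.
    + unfold upM_msub. simpl. f_equal. rewrite app_nil_r, map_map.
      apply map_ext; intros. rewrite liftMe_eq, (proj2 inst_ren). reflexivity.
Qed.

(** * Reduction, stacks and instantiation *)

Scheme red_ind' := Induction for red Sort Prop with rede_ind' := Induction for rede Sort Prop.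
Combined Scheme red_rede_ind from red_ind', rede_ind'.

Lemma red_apps X X' K : red X X' -> red (apps X K) (apps X' K).
Proof. revert X X'; induction K; simpl; intros; auto. apply IHK; constructor; auto. Qed.

Lemma red_inst :
  (forall t t', red t t' -> forall s k, red (inst s k t) (inst s k t')) /\
  (forall e e', rede e e' -> forall s k, rede (inste s k e) (inste s k e')).
Proof.
  apply red_rede_ind; intros; simpl; try (constructor; auto; fail).
  - rewrite inst_substL. constructor.
  - rewrite inst_substL. constructor.
  - rewrite inst_substL. constructor.
  - rewrite !(proj2 (liftL_inst s k)). constructor.
  - rewrite inst_substM. constructor.
  - constructor. apply red_apps; auto.
Qed.

Lemma red_substL v t t' : red t t' -> red (substL 0 v t) (substL 0 v t').
Proof. intros H; rewrite !(proj1 substL_as_inst); apply red_inst; auto. Qed.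

Inductive red_root : term -> term -> Prop :=
| rr_beta u v : red_root (App (Lam u) (ETm v)) (substL 0 v u)
| rr_proj1 t1 t2 : red_root (App (Pair t1 t2) Proj1) t1
| rr_proj2 t1 t2 : red_root (App (Pair t1 t2) Proj2) t2
| rr_case1 t u1 u2 : red_root (App (Inj1 t) (Case u1 u2)) (substL 0 t u1)
| rr_case2 t u1 u2 : red_root (App (Inj2 t) (Case u1 u2)) (substL 0 t u2)
| rr_comm t u1 u2 eps :
    red_root (App (App t (Case u1 u2)) eps)
             (App t (Case (App u1 (liftLe 0 eps)) (App u2 (liftLe 0 eps))))
| rr_mu t eps : red_root (App (Mu t) eps) (Mu (substM 0 (liftMe 0 eps) t)).

Lemma red_App_inv X e T : red (App X e) T ->
  (exists X', red X X' /\ T = App X' e) \/ (exists e', rede e e' /\ T = App X e') \/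
  red_root (App X e) T.
Proof. intros H; inversion H; subst; eauto 10 using red_root. Qed.

(* The reductions of [apps X K] inside [K], including a commuting conversion between two
   items of [K]. *)
Inductive red_stack : list eterm -> list eterm -> Prop :=
| rs_head e e' K : rede e e' -> red_stack (e :: K) (e' :: K)
| rs_tail e K K' : red_stack K K' -> red_stack (e :: K) (e :: K')
| rs_comm u1 u2 e K :
    red_stack (Case u1 u2 :: e :: K) (Case (App u1 (liftLe 0 e)) (App u2 (liftLe 0 e)) :: K).

Lemma red_stack_apps K K' X : red_stack K K' -> red (apps X K) (apps X K').
Proof.
  intros H; revert X; induction H; intros; simpl.
  - apply red_apps; constructor; auto.
  - apply IHred_stack.
  - apply red_apps; constructor.
Qed.

Lemma red_stack_length K K' : red_stack K K' -> length K' <= length K.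
Proof. induction 1; simpl; lia. Qed.

Lemma red_stack_inst s k K K' :
  red_stack K K' -> red_stack (map (inste s k) K) (map (inste s k) K').
Proof.
  induction 1; simpl.
  - constructor. apply red_inst; auto.
  - constructor; auto.
  - rewrite !(proj2 (liftL_inst s k)). constructor.
Qed.

Lemma red_apps_inv X K T : red (apps X K) T ->
  (exists X', red X X' /\ T = apps X' K) \/
  (exists K', red_stack K K' /\ T = apps X K') \/
  (exists e K1 Y, K = e :: K1 /\ red_root (App X e) Y /\ T = apps Y K1).
Proof.
  revert X T; induction K as [|e K IH]; simpl; intros X T H.
  - left; eauto.
  - destruct (IH _ _ H) as [[X' [H1 ->]]|[[K' [H1 ->]]|[e2 [K2 [Y [-> [H1 ->]]]]]]].
    + apply red_App_inv in H1 as [[X'' [H2 ->]]|[[e' [H2 ->]]|H2]].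
      * left; eauto.
      * right; left; exists (e' :: K); split; [constructor; auto|reflexivity].
      * right; right; exists e, K, X'; auto.
    + right; left; exists (e :: K'); split; [constructor; auto|reflexivity].
    + inversion H1; subst.
      right; left; eexists; split; [apply rs_comm|reflexivity].
Qed.

Notation reds := (clos_refl_trans term red).
Notation redes := (clos_refl_trans eterm rede).
Notation red_stacks := (clos_refl_trans (list eterm) red_stack).

Lemma clos_rt_map {A B} (R : relation A) (R' : relation B) (f : A -> B) :
  (forall a b, R a b -> R' (f a) (f b)) ->
  forall a b, clos_refl_trans A R a b -> clos_refl_trans B R' (f a) (f b).
Proof. intros Hf a b H; induction H; eauto using rt_step, rt_refl, rt_trans. Qed.

Lemma reds_inst s k x y : reds x y -> reds (inst s k x) (inst s k y).
Proof. apply clos_rt_map; intros; apply red_inst; auto. Qed.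

Lemma red_stacks_inst s k K K' :
  red_stacks K K' -> red_stacks (map (inste s k) K) (map (inste s k) K').
Proof. apply clos_rt_map; intros; apply red_stack_inst; auto. Qed.

Lemma red_stacks_apps X K K' : red_stacks K K' -> reds (apps X K) (apps X K').
Proof. apply (clos_rt_map _ _ (apps X)); intros; apply red_stack_apps; auto. Qed.

Definition lsub_reds (s s' : lsub) := forall n, reds (s n) (s' n).
Definition msub_reds (k k' : msub) :=
  forall a, fst (k a) = fst (k' a) /\ red_stacks (snd (k a)) (snd (k' a)).

Lemma lsub_reds_upL s s' : lsub_reds s s' -> lsub_reds (upL_lsub s) (upL_lsub s').
Proof. intros H [|n]; simpl; [apply rt_refl|]. rewrite liftL_eq. apply reds_inst; auto. Qed.

Lemma msub_reds_upL k k' : msub_reds k k' -> msub_reds (upL_msub k) (upL_msub k').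
Proof.
  intros H a; unfold upL_msub; simpl; destruct (H a); split; auto.
  rewrite liftLe_eq; apply red_stacks_inst; auto.
Qed.

Lemma lsub_reds_upM s s' : lsub_reds s s' -> lsub_reds (upM_lsub s) (upM_lsub s').
Proof. intros H n; unfold upM_lsub. rewrite liftM_eq. apply reds_inst; auto. Qed.

Lemma msub_reds_upM k k' : msub_reds k k' -> msub_reds (upM_msub k) (upM_msub k').
Proof.
  intros H [|a]; unfold upM_msub; simpl; [split; [reflexivity|apply rt_refl]|].
  destruct (H a); split; [congruence|].
  rewrite liftMe_eq; apply red_stacks_inst; auto.
Qed.

Lemma inst_reds :
  (forall t s s' k k', lsub_reds s s' -> msub_reds k k' -> reds (inst s k t) (inst s' k' t)) /\
  (forall e s s' k k', lsub_reds s s' -> msub_reds k k' -> redes (inste s k e) (inste s' k' e)).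
Proof.
  apply term_eterm_ind; intros; simpl; try apply rt_refl; auto.
  - apply (clos_rt_map red red Lam); [constructor; auto|auto using lsub_reds_upL, msub_reds_upL].
  - apply rt_trans with (App (inst s' k' t) (inste s k e)).
    + apply (clos_rt_map red red (fun x => App x (inste s k e))); [constructor; auto|auto].
    + apply (clos_rt_map rede red (App (inst s' k' t))); [constructor; auto|auto].
  - apply rt_trans with (Pair (inst s' k' u) (inst s k v)).
    + apply (clos_rt_map red red (fun x => Pair x (inst s k v))); [constructor; auto|auto].
    + apply (clos_rt_map red red (Pair (inst s' k' u))); [constructor; auto|auto].
  - apply (clos_rt_map red red Inj1); [constructor; auto|auto].
  - apply (clos_rt_map red red Inj2); [constructor; auto|auto].
  - apply (clos_rt_map red red Mu); [constructor; auto|auto using lsub_reds_upM, msub_reds_upM].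
  - destruct (H1 a) as [-> Hk].
    apply (clos_rt_map red red (Name (fst (k' a)))); [constructor; auto|].
    apply rt_trans with (apps (inst s k t) (snd (k' a))); [apply red_stacks_apps; auto|].
    apply (clos_rt_map red red (fun X => apps X (snd (k' a)))); [intros; apply red_apps; auto|auto].
  - apply (clos_rt_map red rede ETm); [constructor; auto|auto].
  - apply rt_trans
      with (Case (inst (upL_lsub s') (upL_msub k') u) (inst (upL_lsub s) (upL_msub k) v)).
    + apply (clos_rt_map red rede (fun x => Case x _));
        [constructor; auto|auto using lsub_reds_upL, msub_reds_upL].
    + apply (clos_rt_map red rede (Case _));
        [constructor; auto|auto using lsub_reds_upL, msub_reds_upL].
Qed.

(** * Strong normalization *)

Definition SN : term -> Prop := Acc (transp term red).

Lemma SN_red t t' : SN t -> red t t' -> SN t'.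
Proof. intros H R; exact (Acc_inv H R). Qed.

Lemma SN_reds t t' : SN t -> reds t t' -> SN t'.
Proof. intros H R; induction R; eauto using SN_red. Qed.

Lemma SN_preimage (f : term -> term) :
  (forall a b, red a b -> red (f a) (f b)) -> forall t, SN (f t) -> SN t.
Proof.
  intros Hf t H; remember (f t) as u eqn:Eu; revert t Eu.
  induction H as [u _ IH]; intros t ->.
  constructor; intros y Hy. eapply IH; [apply Hf, Hy|reflexivity].
Qed.

Lemma SN_apps_head X K : SN (apps X K) -> SN X.
Proof. apply (SN_preimage (fun X => apps X K)); intros; apply red_apps; auto. Qed.

Lemma SN_inst s k t : SN (inst s k t) -> SN t.
Proof. apply (SN_preimage (inst s k)); intros; apply red_inst; auto. Qed.

Lemma SN_Var n : SN (Var n).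
Proof. constructor; intros y Hy; inversion Hy. Qed.

Lemma SN_image (f : term -> term) :
  (forall X T, red (f X) T -> exists X', red X X' /\ T = f X') -> forall X, SN X -> SN (f X).
Proof.
  intros Hf X H; induction H as [X _ IH].
  constructor; intros T HT. destruct (Hf _ _ HT) as [X' [H ->]]. apply IH, H.
Qed.

Lemma SN_Name a X : SN X -> SN (Name a X).
Proof. apply SN_image; intros X0 T H; inversion H; eauto. Qed.

Lemma SN_Inj1 X : SN X -> SN (Inj1 X).
Proof. apply SN_image; intros X0 T H; inversion H; eauto. Qed.

Lemma SN_Inj2 X : SN X -> SN (Inj2 X).
Proof. apply SN_image; intros X0 T H; inversion H; eauto. Qed.

(** * Head expansions *)

Definition pick {X : Type} (b : bool) (x y : X) : X := if b then x else y.

Lemma SN_apps_Var M K n : SN (apps M K) -> SN (apps (Var n) K).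
Proof.
  intro H; remember (apps M K) as T eqn:ET; revert K ET.
  induction H as [T _ IH]; intros K ->.
  constructor; intros Y HY.
  apply red_apps_inv in HY as [[X' [H _]]|[[K' [H ->]]|[e [K1 [Y' [_ [H _]]]]]]].
  - inversion H.
  - eapply IH; [apply red_stack_apps; eauto|reflexivity].
  - inversion H.
Qed.

Lemma SN_apps_Var_arg n v K : SN v -> SN (apps (Var n) K) -> SN (apps (Var n) (ETm v :: K)).
Proof.
  intros Hv; revert K; induction Hv as [v _ IHv]; intros K HK.
  remember (apps (Var n) K) as T eqn:ET; revert K ET.
  induction HK as [T HT IHT]; intros K ->.
  constructor; intros Y HY; simpl in HY.
  apply red_apps_inv in HY as [[X' [H ->]]|[[K' [H ->]]|[e [K1 [Y' [_ [H _]]]]]]].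
  - apply red_App_inv in H as [[X'' [H _]]|[[e' [H ->]]|H]]; inversion H; subst.
    apply IHv; [assumption|constructor; exact HT].
  - eapply IHT; [apply red_stack_apps; eauto|reflexivity].
  - inversion H.
Qed.

Lemma SN_apps_Var_proj b n K : SN (apps (Var n) K) -> SN (apps (Var n) (pick b Proj1 Proj2 :: K)).
Proof.
  intros HK; remember (apps (Var n) K) as T eqn:ET; revert K ET.
  induction HK as [T _ IHT]; intros K ->.
  constructor; intros Y HY; simpl in HY.
  apply red_apps_inv in HY as [[X' [H ->]]|[[K' [H ->]]|[e [K1 [Y' [_ [H _]]]]]]].
  - apply red_App_inv in H as [[X'' [H _]]|[[e' [H ->]]|H]]; destruct b; inversion H.
  - eapply IHT; [apply red_stack_apps; eauto|reflexivity].
  - destruct b; inversion H.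
Qed.

Lemma reds_apps X X' K : reds X X' -> reds (apps X K) (apps X' K).
Proof. apply (clos_rt_map red red (fun X => apps X K)); intros; apply red_apps; auto. Qed.

Lemma reds_substL v v' t : red v v' -> reds (substL 0 v t) (substL 0 v' t).
Proof.
  intros H; rewrite !(proj1 substL_as_inst). apply inst_reds.
  - intros [|n]; simpl; [apply rt_step, H|apply rt_refl].
  - intros a; split; [reflexivity|apply rt_refl].
Qed.

Lemma SN_apps_beta t v K : SN v -> SN (apps (substL 0 v t) K) -> SN (apps (App (Lam t) (ETm v)) K).
Proof.
  intros Hv; revert t K; induction Hv as [v _ IHv]; intros t K H1.
  remember (apps (substL 0 v t) K) as T eqn:ET; revert t K ET.
  induction H1 as [T HT IHT]; intros t K ->.
  assert (SNT : SN (apps (substL 0 v t) K)) by (constructor; exact HT).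
  constructor; intros Y HY.
  apply red_apps_inv in HY as [[X' [H ->]]|[[K' [H ->]]|[e [K1 [Y' [_ [H _]]]]]]].
  - apply red_App_inv in H as [[X'' [H ->]]|[[e' [H ->]]|H]]; inversion H; subst.
    + eapply IHT; [apply red_apps, red_substL; eassumption|reflexivity].
    + apply IHv; [assumption|].
      eapply SN_reds; [exact SNT|]. apply reds_apps, reds_substL; assumption.
    + exact SNT.
  - eapply IHT; [apply red_stack_apps; eauto|reflexivity].
  - inversion H.
Qed.

Lemma SN_apps_proj b u1 u2 K :
  SN (pick b u2 u1) -> SN (apps (pick b u1 u2) K) ->
  SN (apps (App (Pair u1 u2) (pick b Proj1 Proj2)) K).
Proof.
  enough (G : forall w, SN w -> forall T, SN T -> forall u1 u2 K,
    pick b u2 u1 = w -> apps (pick b u1 u2) K = T ->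
    SN (apps (App (Pair u1 u2) (pick b Proj1 Proj2)) K)) by eauto.
  clear u1 u2 K.
  intros w Hw; induction Hw as [w _ IHw]; intros T HT; induction HT as [T HT IHT].
  assert (SNT : SN T) by (constructor; exact HT).
  intros u1 u2 K <- <-.
  constructor; intros Y HY.
  apply red_apps_inv in HY as [[X' [H ->]]|[[K' [H ->]]|[e [K1 [Y' [_ [H _]]]]]]].
  - apply red_App_inv in H as [[X'' [H ->]]|[[e' [H ->]]|H]]; destruct b; inversion H; subst.
    all: first [ exact SNT
               | eapply IHT; [apply red_apps; eassumption|reflexivity|reflexivity]
               | eapply IHw; [eassumption|exact SNT|reflexivity|reflexivity] ].
  - eapply IHT; [apply red_stack_apps; eauto|reflexivity|reflexivity].
  - destruct b; inversion H.
Qed.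

(* The branch that is not taken only has to be SN with the stack pushed into it,
   because commuting conversions move the stack into both branches. *)
Lemma SN_apps_case b w u1 u2 K :
  SN w -> SN (apps (substL 0 w (pick b u1 u2)) K) -> SN (apps (pick b u2 u1) (map (liftLe 0) K)) ->
  SN (apps (App (pick b Inj1 Inj2 w) (Case u1 u2)) K).
Proof.
  enough (G : forall n w, SN w -> forall T1, SN T1 -> forall T2, SN T2 -> forall u1 u2 K,
    length K = n -> apps (substL 0 w (pick b u1 u2)) K = T1 ->
    apps (pick b u2 u1) (map (liftLe 0) K) = T2 ->
    SN (apps (App (pick b Inj1 Inj2 w) (Case u1 u2)) K)) by eauto.
  clear w u1 u2 K.
  intro n; induction n as [n IHn] using lt_wf_ind.
  intros w Hw; induction Hw as [w Hw IHw]; intros T1 HT1; induction HT1 as [T1 HT1 IHT1];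
  intros T2 HT2; induction HT2 as [T2 HT2 IHT2].
  assert (SNw : SN w) by (constructor; exact Hw).
  assert (SNT1 : SN T1) by (constructor; exact HT1).
  assert (SNT2 : SN T2) by (constructor; exact HT2).
  intros u1 u2 K Hn <- <-.
  constructor; intros Y HY.
  apply red_apps_inv in HY as [[X' [H ->]]|[[K' [H ->]]|[e [K1 [Y' [-> [H ->]]]]]]].
  - apply red_App_inv in H as [[X'' [H ->]]|[[e' [H ->]]|H]]; destruct b; inversion H; subst.
    all: first [ exact SNT1
               | eapply IHw; [eassumption| |exact SNT2|reflexivity|reflexivity|reflexivity];
                 eapply SN_reds; [exact SNT1|apply reds_apps, reds_substL; assumption]
               | eapply IHT1; [apply red_apps, red_substL; eassumption|exact SNT2|reflexivity..]
               | eapply IHT2; [apply red_apps; eassumption|reflexivity..] ].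
  - assert (SNT1' : SN (apps (substL 0 w (pick b u1 u2)) K'))
      by (eapply SN_red; [exact SNT1|apply red_stack_apps; assumption]).
    assert (SNT2' : SN (apps (pick b u2 u1) (map (liftLe 0) K'))).
    { eapply SN_red; [exact SNT2|].
      apply red_stack_apps. rewrite liftLe_eq. apply red_stack_inst, H. }
    destruct (Nat.lt_ge_cases (length K') (length K)) as [Hlt|Hge].
    + eapply (IHn (length K')); [lia|exact SNw|exact SNT1'|exact SNT2'|reflexivity..].
    + pose proof (red_stack_length _ _ H).
      eapply IHT1; [apply red_stack_apps; eassumption|exact SNT2'|lia|reflexivity..].
  - destruct b; inversion H; subst.
    all: eapply (IHn (length K1));
      [simpl; lia|exact SNw|exact SNT1|exact SNT2|reflexivity| |reflexivity].
    all: simpl; rewrite (proj2 (substL_liftL w)); reflexivity.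
Qed.

(* [inst lid (mstack L) t] replaces every (a_0 v) in t by (a_0 (v L)); for [L] a lifted stack
   this is the body obtained by μ-reducing (μa_0.t) against every element of [L] in turn. *)
Definition mstack (L : list eterm) : msub :=
  fun a => match a with 0 => (0, L) | S b => (S b, []) end.

Lemma inst_mstack_substM L e t :
  inst lid (mstack L) (substM 0 (liftMe 0 e) t) = inst lid (mstack (liftMe 0 e :: L)) t.
Proof.
  rewrite (proj1 substM_as_inst), (proj1 inst_inst).
  f_equal; apply functional_extensionality; intros [|a]; unfold msub_comp; simpl; try reflexivity.
  rewrite liftMe_eq, (proj2 inst_ren). reflexivity.
Qed.

Lemma reds_mstack t K K' : red_stack K K' ->
  reds (inst lid (mstack (map (liftMe 0) K)) t) (inst lid (mstack (map (liftMe 0) K')) t).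
Proof.
  intros H. apply inst_reds; [intros n; apply rt_refl|].
  intros [|a]; simpl; split; try reflexivity; try apply rt_refl.
  apply rt_step. rewrite liftMe_eq. apply red_stack_inst, H.
Qed.

Lemma SN_apps_Mu t K :
  SN (apps (Var 0) K) -> SN (inst lid (mstack (map (liftMe 0) K)) t) -> SN (apps (Mu t) K).
Proof.
  enough (G : forall n T2, SN T2 -> forall T1, SN T1 -> forall t K, length K = n ->
    apps (Var 0) K = T2 -> inst lid (mstack (map (liftMe 0) K)) t = T1 ->
    SN (apps (Mu t) K)) by eauto.
  clear t K.
  intro n; induction n as [n IHn] using lt_wf_ind.
  intros T2 HT2; induction HT2 as [T2 HT2 IHT2]; intros T1 HT1; induction HT1 as [T1 HT1 IHT1].
  assert (SNT2 : SN T2) by (constructor; exact HT2).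
  assert (SNT1 : SN T1) by (constructor; exact HT1).
  intros t K Hn <- <-.
  constructor; intros Y HY.
  apply red_apps_inv in HY as [[X' [H ->]]|[[K' [H ->]]|[e [K1 [Y' [-> [H ->]]]]]]].
  - inversion H; subst. eapply IHT1; [apply red_inst; eassumption|reflexivity..].
  - assert (SNT1' : SN (inst lid (mstack (map (liftMe 0) K')) t))
      by (eapply SN_reds; [exact SNT1|apply reds_mstack, H]).
    assert (SNT2' : SN (apps (Var 0) K'))
      by (eapply SN_red; [exact SNT2|apply red_stack_apps, H]).
    destruct (Nat.lt_ge_cases (length K') (length K)) as [Hlt|Hge].
    + eapply (IHn (length K')); [lia|exact SNT2'|exact SNT1'|reflexivity..].
    + pose proof (red_stack_length _ _ H).
      eapply IHT2; [apply red_stack_apps; eassumption|exact SNT1'|lia|reflexivity..].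
  - inversion H; subst.
    eapply (IHn (length K1));
      [simpl; lia|exact (SN_apps_Var (App (Var 0) e) K1 0 SNT2)|exact SNT1|reflexivity..|].
    rewrite inst_mstack_substM. reflexivity.
Qed.

Lemma substL_apps_liftL w X K : substL 0 w (apps X (map (liftLe 0) K)) = apps (substL 0 w X) K.
Proof.
  revert X; induction K; simpl; intros; auto.
  rewrite IHK. simpl. rewrite (proj2 (substL_liftL w)). reflexivity.
Qed.

Lemma SN_apps_liftL X K : SN (apps (substL 0 (Var 0) X) K) -> SN (apps X (map (liftLe 0) K)).
Proof.
  intros H. apply (SN_preimage (substL 0 (Var 0))); [intros; apply red_substL; auto|].
  rewrite substL_apps_liftL. exact H.
Qed.

(** * Reducibility *)

(* Stacks of a disjunction
   begin with a [Case] whose branches are arbitrary terms, so they are defined by orthogonality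
   to the injections of reducible terms. *)
Fixpoint cont (A : ty) : list eterm -> Prop :=
  match A with
  | TVar _ | Bot => fun K => K = []
  | Arr A B => fun K =>
      exists v K', K = ETm v :: K' /\ (forall L, cont A L -> SN (apps v L)) /\ cont B K'
  | And A B => fun K => exists K', K = Proj1 :: K' /\ cont A K' \/ K = Proj2 :: K' /\ cont B K'
  | Or A B => fun K =>
      (forall w, (forall L, cont A L -> SN (apps w L)) -> SN (apps (Inj1 w) K)) /\
      (forall w, (forall L, cont B L -> SN (apps w L)) -> SN (apps (Inj2 w) K))
  end.

Definition reducible (A : ty) (t : term) : Prop := forall K, cont A K -> SN (apps t K).

Lemma reducible_candidate A :
  (forall n, reducible A (Var n)) /\ (forall t, reducible A t -> SN t) /\ (exists K, cont A K).
Proof.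
  unfold reducible; induction A as [p| |A [VA [SA [KA HKA]]] B [VB [SB [KB HKB]]]
    |A [VA [SA [KA HKA]]] B [VB [SB [KB HKB]]]|A [VA [SA _]] B [VB [SB _]]]; simpl.
  1-2: split; [intros n K ->; apply SN_Var|].
  1-2: split; [intros t H; exact (H [] eq_refl)|exists []; reflexivity].
  - split; [|split].
    + intros n K [v [K' [-> [Hv HK']]]]. apply SN_apps_Var_arg; [apply SA, Hv|apply VB, HK'].
    + intros t H. apply (SN_apps_head t (ETm (Var 0) :: KB)), H. exists (Var 0), KB; auto.
    + exists (ETm (Var 0) :: KB), (Var 0), KB; auto.
  - split; [|split].
    + intros n K [K' [[-> H]|[-> H]]];
        [apply (SN_apps_Var_proj true), VA, H|apply (SN_apps_Var_proj false), VB, H].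
    + intros t H. apply (SN_apps_head t (Proj1 :: KA)), H. exists KA; auto.
    + exists (Proj1 :: KA), KA; auto.
  - assert (Hnil : cont (Or A B) []).
    { split; intros w Hw; [apply SN_Inj1, SA, Hw|apply SN_Inj2, SB, Hw]. }
    split; [|split].
    + intros n K [H1 _]. apply (SN_apps_Var (Inj1 (Var 0))), H1, VA.
    + intros t H. apply (H []), Hnil.
    + exists []; exact Hnil.
Qed.

Lemma reducible_Var A n : reducible A (Var n).
Proof. apply (reducible_candidate A). Qed.

Lemma reducible_SN A t : reducible A t -> SN t.
Proof. apply (reducible_candidate A). Qed.

Definition msub_cons (L : list eterm) (k : msub) : msub :=
  fun a => match a with 0 => (0, L) | S b => k b end.

Lemma inst_liftM_unbind k : (forall a, k (S a) = (a, [])) ->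
  (forall x, inst lid k (liftM 0 x) = x) /\ (forall e, inste lid k (liftMe 0 e) = e).
Proof.
  intros Hk.
  assert (E : (fun a => k (bump 0 a)) = (fun a => mid a))
    by (apply functional_extensionality; exact Hk).
  split; intros; rewrite ?liftM_eq, ?liftMe_eq, ?(proj1 inst_ren), ?(proj2 inst_ren), E;
    apply inst_id.
Qed.

(* [mren pred] identifies the bound μ-variable with the free μ-variable 0; since [inst]
   reflects SN, this reduces the μ case of adequacy to an instance by [msub_cons K k]. *)
Lemma inst_mu_body s k K t :
  inst lid (mren pred) (inst lid (mstack (map (liftMe 0) K)) (inst (upM_lsub s) (upM_msub k) t))
  = inst s (msub_cons K k) t.
Proof.
  assert (E : forall x, inst lid (mren pred) (inst lid (mstack (map (liftMe 0) K)) x)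
                        = inst lid (msub_cons K mid) x).
  { intros x. rewrite (proj1 inst_inst). f_equal; apply functional_extensionality.
    all: intros [|a]; unfold msub_comp; simpl; try reflexivity.
    rewrite app_nil_r, map_map, (map_ext _ (fun e => e)), map_id; [reflexivity|].
    apply inst_liftM_unbind; reflexivity. }
  rewrite E, (proj1 inst_inst). f_equal; apply functional_extensionality.
  - intros n; apply inst_liftM_unbind; reflexivity.
  - intros [|a]; unfold msub_comp; simpl; try reflexivity.
    rewrite app_nil_r, map_map, (map_ext _ (fun e => e)), map_id.
    + destruct (k a); reflexivity.
    + apply inst_liftM_unbind; reflexivity.
Qed.

Lemma reducible_inst G D t A : typing G D t A ->
  forall s k, (forall n, reducible (G n) (s n)) ->
  (forall a v, reducible (D a) v -> SN (apps v (snd (k a)))) ->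
  reducible A (inst s k t).
Proof.
  induction 1; intros s k Hs Hk.
  - apply Hs.
  - intros K [v [K' [-> [Hv HK']]]]. simpl.
    apply SN_apps_beta; [exact (reducible_SN A v Hv)|].
    rewrite substL_inst_upL. apply IHtyping; auto. intros [|n]; simpl; auto.
  - intros K HK. apply (IHtyping1 s k Hs Hk (ETm (inst s k v) :: K)).
    exists (inst s k v), K; split; auto. split; auto. apply IHtyping2; auto.
  - intros K [K' [[-> HK]|[-> HK]]].
    + apply (SN_apps_proj true); [apply (reducible_SN B), IHtyping2|apply IHtyping1]; auto.
    + apply (SN_apps_proj false); [apply (reducible_SN A), IHtyping1|apply IHtyping2]; auto.
  - intros K HK. apply (IHtyping s k Hs Hk (Proj1 :: K)). exists K; auto.
  - intros K HK. apply (IHtyping s k Hs Hk (Proj2 :: K)). exists K; auto.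
  - intros K [H1 _]. apply H1, IHtyping; auto.
  - intros K [_ H2]. apply H2, IHtyping; auto.
  - intros K HK. apply (IHtyping1 s k Hs Hk (Case _ _ :: K)).
    split; intros w Hw.
    + apply (SN_apps_case true); [exact (reducible_SN A w Hw)| |apply SN_apps_liftL];
        simpl; rewrite substL_inst_upL; [apply IHtyping2|apply IHtyping3]; auto;
        intros [|n]; simpl; auto using reducible_Var.
    + apply (SN_apps_case false); [exact (reducible_SN B w Hw)| |apply SN_apps_liftL];
        simpl; rewrite substL_inst_upL; [apply IHtyping3|apply IHtyping2]; auto;
        intros [|n]; simpl; auto using reducible_Var.
  - intros K HK. simpl in HK; subst. apply SN_Name, Hk, IHtyping; auto.
  - intros K HK. apply SN_apps_Mu; [exact (reducible_Var A 0 K HK)|].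
    apply (SN_inst lid (mren pred)). rewrite inst_mu_body.
    apply (reducible_SN Bot), IHtyping; [exact Hs|].
    intros [|a] v Hv; simpl; auto.
Qed.

Lemma SN_no_infinite_chain t :
  SN t -> ~ (exists f : nat -> term, f 0 = t /\ forall i, red (f i) (f (S i))).
Proof.
  induction 1 as [t _ IH]. intros [f [<- Hf]].
  apply (IH (f 1) (Hf 0)). exists (fun i => f (S i)); split; auto.
Qed.

Theorem theorem3 (G D : ctx) (t : term) (A : ty) :
  typing G D t A ->
  ~ (exists f : nat -> term, f 0 = t /\ forall i, red (f i) (f (S i))).
Proof.
  intros Hty. apply SN_no_infinite_chain, (reducible_SN A).
  rewrite <- (proj1 inst_id t). apply (reducible_inst G D t A Hty).
  - intros n. apply reducible_Var.
  - intros a v Hv. apply (reducible_SN (D a)), Hv.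
Qed.
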